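(* Let $\mathcal{C}$ be an abelian $k$-linear category, $\mathcal{E}=(E_i)_{i\in\mathbb{Z}}$ a coherent sequence in $\mathcal{C}$, and $A=A(\mathcal{E})$ the corresponding $\mathbb{Z}$-algebra. Then (i) for every $X\in\mathcal{C}$ and every $m\in\mathbb{Z}$ the $A$-module $\Gamma_{\le m}X$ is coherent; (ii) the $\mathbb{Z}$-algebra $A$ is coherent.
   Context: $k$ is a fixed field. A $\mathbb{Z}$-algebra is an associative $k$-algebra $A=\bigoplus_{i\le j}A_{ij}$ with $A_{ii}=k$, only nonzero products $A_{jk}\otimes A_{ij}\to A_{ik}$, units acting as identity, $\dim A_{ij}<\infty$. An $A$-module is a graded right module $M=\bigoplus_iM_i$ with action $M_j\otimes A_{ij}\to M_i$. $P_j=\bigoplus_iA_{ij}$; $S_j$ is $k$ in degree $j$, $0$ elsewhere; $\mathcal{P}$ = finite direct sums of $P_j$'s. $M$ is finitely generated if a quotient of some $P\in\mathcal{P}$; coherent if finitely generated and every kernel of a map $P\to M$, $P\in\mathcal{P}$, is finitely generated. $A$ is coherent if all $P_j$, $S_j$ are coherent. Sequences $\mathcal{E}=(E_i)$ are assumed to satisfy $\dim_k\operatorname{Hom}(E_i,X)<\infty$ for all $X\in\mathcal{C}$. $A(\mathcal{E})$ has $A_{ij}=\operatorname{Hom}(E_i,E_j)$ for $i<j$, $A_{ii}=k$, multiplication by composition. $\Gamma_{\le m}X=\bigoplus_{i\le m}\operatorname{Hom}(E_i,X)$. $\mathcal{E}$ is projective if for every surjection $X\to Y$ there is $n$ with $\operatorname{Hom}(E_i,X)\to\operatorname{Hom}(E_i,Y)$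 surjective for $i<n$; a projective sequence is coherent if for every $X$ and $m$ there are $i_1,\dots,i_s\le m$ with $\bigoplus_j\operatorname{Hom}(E_{i_j},X)\otimes\operatorname{Hom}(E_i,E_{i_j})\to\operatorname{Hom}(E_i,X)$ surjective for $i\ll0$. *)

From HB Require Import structures.
From mathcomp Require Import all_boot all_order all_algebra.
From Stdlib Require Import ClassicalEpsilon.
Set Implicit Arguments. Unset Strict Implicit. Unset Printing Implicit Defensive.
Import Order.TTheory GRing.Theory Num.Theory.
Local Open Scope ring_scope.

Definition Kl (k : fieldType) : lmodType k := GRing.Lmodule.clone k k^o _.
Definition Zl (k : fieldType) : lmodType k := GRing.Lmodule.clone k 'rV[k]_0 _.
Definition prodL (k : fieldType) (V W : lmodType k) : lmodType k :=
  GRing.Lmodule.clone k (V * W)%type _.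

Definition fin_dim (k : fieldType) (V : lmodType k) : Prop :=
  exists (n : nat) (v : 'I_n -> V),
    forall x : V, exists c : 'I_n -> k, x = \sum_(t < n) c t *: v t.

Record kcat (k : fieldType) := KCat {
  ob : Type;
  hom : ob -> ob -> lmodType k;
  idm : forall X, hom X X;
  comp : forall X Y Z, hom Y Z -> hom X Y -> hom X Z }.
Arguments ob {k} _.
Arguments hom {k} _ _ _.
Arguments idm {k _} _.
Arguments comp {k _ _ _ _}.

Section Cat.
Variables (k : fieldType) (C : kcat k).

Definition klinear_cat : Prop :=
  (forall (X Y Z W : ob C) (h : hom C Z W) (g : hom C Y Z) (f : hom C X Y),
      comp h (comp g f) = comp (comp h g) f) /\
  (forall (X Y : ob C) (f : hom C X Y), comp (idm Y) f = f) /\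
  (forall (X Y : ob C) (f : hom C X Y), comp f (idm X) = f) /\
  (forall (X Y Z : ob C) (c : k) (g g' : hom C Y Z) (f : hom C X Y),
      comp (c *: g + g') f = c *: comp g f + comp g' f) /\
  (forall (X Y Z : ob C) (c : k) (g : hom C Y Z) (f f' : hom C X Y),
      comp g (c *: f + f') = c *: comp g f + comp g f').

Definition mono (X Y : ob C) (f : hom C X Y) : Prop :=
  forall (W : ob C) (g h : hom C W X), comp f g = comp f h -> g = h.
Definition epi (X Y : ob C) (f : hom C X Y) : Prop :=
  forall (W : ob C) (g h : hom C Y W), comp g f = comp h f -> g = h.

Definition is_kernel (X Y : ob C) (f : hom C X Y) (K : ob C) (u : hom C K X) :=
  comp f u = 0 /\
  forall (W : ob C) (g : hom C W X), comp f g = 0 ->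
    exists h : hom C W K, comp u h = g /\ forall h', comp u h' = g -> h' = h.
Definition is_cokernel (X Y : ob C) (f : hom C X Y) (Q : ob C) (q : hom C Y Q) :=
  comp q f = 0 /\
  forall (W : ob C) (g : hom C Y W), comp g f = 0 ->
    exists h : hom C Q W, comp h q = g /\ forall h', comp h' q = g -> h' = h.

Arguments is_kernel {X Y} f K u.
Arguments is_cokernel {X Y} f Q q.

Definition abelian : Prop :=
  klinear_cat /\
  (exists Z : ob C, forall X : ob C,
      (forall f g : hom C X Z, f = g) /\ (forall f g : hom C Z X, f = g)) /\
  (forall X Y : ob C, exists (S : ob C) (i1 : hom C X S) (i2 : hom C Y S)
      (p1 : hom C S X) (p2 : hom C S Y),
      [/\ comp p1 i1 = idm X, comp p2 i2 = idm Y, comp p1 i2 = 0,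
          comp p2 i1 = 0 & comp i1 p1 + comp i2 p2 = idm S]) /\
  (forall (X Y : ob C) (f : hom C X Y), exists K u, is_kernel f K u) /\
  (forall (X Y : ob C) (f : hom C X Y), exists Q q, is_cokernel f Q q) /\
  (forall (X Y : ob C) (f : hom C X Y), mono f ->
      exists (W : ob C) (g : hom C Y W), is_kernel g X f) /\
  (forall (X Y : ob C) (f : hom C X Y), epi f ->
      exists (W : ob C) (g : hom C W X), is_cokernel g Y f).

Definition homfin_seq (E : int -> ob C) : Prop :=
  forall (i : int) (X : ob C), fin_dim (hom C (E i) X).

Definition projective_seq (E : int -> ob C) : Prop :=
  forall (X Y : ob C) (f : hom C X Y), epi f ->
    exists n : int, forall i : int, i < n ->
      forall g : hom C (E i) Y, exists g' : hom C (E i) X, comp f g' = g.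

(* the image of  (+)_j Hom(E_{i_j},X) (x) Hom(E_i,E_{i_j}) -> Hom(E_i,X)
   consists of finite sums of compositions f o h with f, h in some summand *)
Definition coherent_seq (E : int -> ob C) : Prop :=
  projective_seq E /\
  forall (X : ob C) (m : int), exists s : seq int,
    all (fun j => j <= m) s /\
    exists n : int, forall i : int, i < n -> forall g : hom C (E i) X,
      exists (N : nat) (js : 'I_N -> int)
             (f : forall t, hom C (E (js t)) X) (h : forall t, hom C (E i) (E (js t))),
        (forall t, js t \in s) /\ g = \sum_(t < N) comp (f t) (h t).
End Cat.

(* Z-algebras: zc i j is A_ij, zmul : A_jl (x) A_ij -> A_il *)
Record zalg (k : fieldType) := ZAlg {
  zc : int -> int -> lmodType k;
  zmul : forall i j l, zc j l -> zc i j -> zc i l;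
  zone : forall i, zc i i }.
Arguments zc {k}.
Arguments zmul {k _ i j l}.
Arguments zone {k} _ _.

(* graded right modules: act : M_j (x) A_ij -> M_i *)
Record zmod (k : fieldType) (A : zalg k) := ZMod {
  mc : int -> lmodType k;
  act : forall i j, mc j -> zc A i j -> mc i }.
Arguments mc {k A}.
Arguments act {k _ _ i j}.

Section Modules.
Variables (k : fieldType) (A : zalg k).

Record zhom (M N : zmod A) := ZHom { hf : forall i, mc M i -> mc N i }.
Arguments hf {M N}.

Definition is_zhom (M N : zmod A) (phi : zhom M N) : Prop :=
  (forall i (c : k) (x y : mc M i), hf phi i (c *: x + y) = c *: hf phi i x + hf phi i y) /\
  (forall i j (x : mc M j) (a : zc A i j), hf phi i (act x a) = act (hf phi j x) a).

Definition Pmod (j : int) : zmod A :=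
  @ZMod k A (fun i => zc A i j) (fun i l (x : zc A l j) (a : zc A i l) => zmul x a).

Definition Scar (j i : int) : lmodType k := if i == j then Kl k else Zl k.
Definition Sto (j i : int) : Scar j i -> k :=
  match i == j as b return ((if b then Kl k else Zl k) : lmodType k) -> k with
  | true => fun x => x | false => fun _ => 0 end.
Definition Sof (j i : int) : k -> Scar j i :=
  match i == j as b return k -> ((if b then Kl k else Zl k) : lmodType k) with
  | true => fun x => x | false => fun _ => 0 end.
(* the scalar c with a = c * 1 for a in A_ii = k (arbitrary if i <> l) *)
Definition dcoef (i l : int) (a : zc A i l) : k :=
  epsilon (inhabits 0) (fun c : k =>
    forall e : l = i, eq_rect l (zc A i) a i e = c *: zone A i).
Definition Smod (j : int) : zmod A :=
  @ZMod k A (Scar j) (fun i l (x : Scar j l) (a : zc A i l) => Sof j i (dcoef a * Sto x)).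

Definition zero_mod : zmod A := @ZMod k A (fun _ => Zl k) (fun _ _ _ _ => 0).
Definition sum_mod (M N : zmod A) : zmod A :=
  @ZMod k A (fun i => prodL (mc M i) (mc N i))
    (fun i j (x : prodL (mc M j) (mc N j)) (a : zc A i j) =>
       ((act x.1 a, act x.2 a) : prodL (mc M i) (mc N i))).
Definition Pfree (js : seq int) : zmod A := foldr (fun j P => sum_mod (Pmod j) P) zero_mod js.

Definition fg_sub (M : zmod A) (S : forall i, mc M i -> Prop) : Prop :=
  exists (js : seq int) (psi : zhom (Pfree js) M),
    is_zhom psi /\ forall i (y : mc M i), S i y <-> exists x, hf psi i x = y.

Definition fin_gen (M : zmod A) : Prop := @fg_sub M (fun _ _ => True).

Definition coherent_mod (M : zmod A) : Prop :=
  fin_gen M /\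
  forall (js : seq int) (phi : zhom (Pfree js) M), is_zhom phi ->
    @fg_sub (Pfree js) (fun i x => hf phi i x = 0).
End Modules.

Definition coherent_zalg (k : fieldType) (A : zalg k) : Prop :=
  forall j : int, coherent_mod (Pmod A j) /\ coherent_mod (Smod A j).

Section AE.
Variables (k : fieldType) (C : kcat k) (E : int -> ob C).

Definition AEc (i j : int) : lmodType k :=
  if i < j then hom C (E i) (E j) else if i == j then Kl k else Zl k.

Definition AE_toHom (i j : int) : AEc i j -> hom C (E i) (E j) :=
  match i < j as b return
        ((if b then hom C (E i) (E j) else if i == j then Kl k else Zl k) : lmodType k)
        -> hom C (E i) (E j) with
  | true => fun x => x | false => fun _ => 0 end.
Definition AE_toK (i j : int) : AEc i j -> k :=
  match i < j as b return
        ((if b then hom C (E i) (E j) else if i == j then Kl k else Zl k) : lmodType k)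
        -> k with
  | true => fun _ => 0
  | false => fun x =>
      (match i == j as b return ((if b then Kl k else Zl k) : lmodType k) -> k with
       | true => fun y => y | false => fun _ => 0 end) x end.
Definition AE_ofHom (i j : int) : hom C (E i) (E j) -> AEc i j :=
  match i < j as b return hom C (E i) (E j) ->
        ((if b then hom C (E i) (E j) else if i == j then Kl k else Zl k) : lmodType k) with
  | true => fun f => f | false => fun _ => 0 end.
Definition AE_ofK (i j : int) : k -> AEc i j :=
  match i < j as b return k ->
        ((if b then hom C (E i) (E j) else if i == j then Kl k else Zl k) : lmodType k) with
  | true => fun _ => 0
  | false => fun c =>
      (match i == j as b return ((if b then Kl k else Zl k) : lmodType k) with
       | true => c | false => 0 end) end.

Definition idh (i j : int) : hom C (E i) (E j) :=
  match i =P j with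
  | ReflectT e => eq_rect i (fun l => hom C (E i) (E l)) (idm (E i)) j e
  | ReflectF _ => 0 end.

Definition AE_emb (i j : int) (a : AEc i j) : hom C (E i) (E j) :=
  AE_toHom a + AE_toK a *: idh i j.

Definition AE_mul (i j l : int) (b : AEc j l) (a : AEc i j) : AEc i l :=
  if i < l then @AE_ofHom i l (comp (AE_emb b) (AE_emb a))
  else AE_ofK i l (AE_toK a * AE_toK b).

Definition AE : zalg k := @ZAlg k AEc AE_mul (fun i => AE_ofK i i 1).

Definition Gc (X : ob C) (m i : int) : lmodType k :=
  if i <= m then hom C (E i) X else Zl k.
Definition G_to (X : ob C) (m i : int) : Gc X m i -> hom C (E i) X :=
  match i <= m as b return ((if b then hom C (E i) X else Zl k) : lmodType k)
                           -> hom C (E i) X with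
  | true => fun x => x | false => fun _ => 0 end.
Definition G_of (X : ob C) (m i : int) : hom C (E i) X -> Gc X m i :=
  match i <= m as b return hom C (E i) X ->
                           ((if b then hom C (E i) X else Zl k) : lmodType k) with
  | true => fun x => x | false => fun _ => 0 end.

Definition Gamma_le (m : int) (X : ob C) : zmod AE :=
  @ZMod k AE (Gc X m)
    (fun i j (x : Gc X m j) (a : AEc i j) => @G_of X m i (comp (G_to x) (AE_emb a))).
End AE.

(* Below some degree, each of Gamma_{<=m} X, P_j and S_j is an A-stable graded
   subspace of (+)_i Hom(E_i, Y) for a suitable object Y ([embeds_in_hom]).
   A finite free module P = (+)_{j in js} P_j is, below all j, isomorphic to
   (+)_i Hom(E_i, B) with B the biproduct of the E_j, so a module map P -> M
   is there composition with a morphism f : B -> Y, and its kernel is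
   Hom(E_i, ker f); coherence of the sequence generates this, in all low
   degrees, from finitely many degrees. The kernel vanishes above the degrees
   of js and has finite-dimensional components, so the remaining finitely many
   degrees need only finitely many more generators. Finite generation of
   Gamma_{<=m} X follows from coherence in the same way; P_j and S_j are
   generated by a single element. *)

From mathcomp Require Import all_boot all_order all_algebra zify.
From Stdlib Require Import ClassicalEpsilon Classical.
Set Implicit Arguments. Unset Strict Implicit. Unset Printing Implicit Defensive.
Import Order.TTheory GRing.Theory Num.Theory.
Local Open Scope ring_scope.

Section LinearFunctions.
Variables (k : fieldType) (U : lmodType k) (V : zmodType) (s : GRing.Scale.law k V).
Variables (f : U -> V) (f_lin : linear_for s f).

Lemma lin0 : f 0 = 0.
Proof. by rewrite -(subrr (0 : U)) (GRing.zmod_morphism_linear f_lin) subrr. Qed.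

Lemma linD : {morph f : x y / x + y}.
Proof. exact: (GRing.semilinear_linear f_lin).2. Qed.

Lemma linZ (c : k) : {morph f : x / c *: x >-> s c x}.
Proof. exact: (GRing.semilinear_linear f_lin).1. Qed.

Lemma lin_sum (I : Type) (r : seq I) (P : pred I) (F : I -> U) :
  f (\sum_(i <- r | P i) F i) = \sum_(i <- r | P i) f (F i).
Proof. exact: (big_morph f linD lin0). Qed.
End LinearFunctions.

Section Span.
Variables (k : fieldType) (V : lmodType k).

Fixpoint lspan (s : seq V) (x : V) : Prop :=
  if s is w :: s' then exists c y, lspan s' y /\ x = c *: w + y else x = 0.

Definition finspan : Prop := exists s : seq V, forall x, lspan s x.

Definition subspace (P : V -> Prop) : Prop :=
  P 0 /\ forall c x y, P x -> P y -> P (c *: x + y).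

Lemma subspaceD P : subspace P -> forall x y, P x -> P y -> P (x + y).
Proof. by case=> _ H x y Px Py; have := H 1 x y Px Py; rewrite scale1r. Qed.

Lemma subspaceZ P : subspace P -> forall c x, P x -> P (c *: x).
Proof. by case=> P0 H c x Px; have := H c x 0 Px P0; rewrite addr0. Qed.

Lemma lspan_subspace s : subspace (lspan s).
Proof.
elim: s => [|w s [IH0 IH]] /=; first by split=> // c x y -> ->; rewrite scaler0 addr0.
split; first by exists 0, 0; rewrite scale0r addr0.
move=> c x y [c1 [y1 [h1 ->]]] [c2 [y2 [h2 ->]]].
exists (c * c1 + c2), (c *: y1 + y2); split; first exact: IH.
by rewrite scalerDr scalerA scalerDl addrACA.
Qed.

Lemma lspan_min s P : subspace P -> (forall w, w \in s -> P w) -> forall x, lspan s x -> P x.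
Proof.
move=> hP; elim: s => [|w s IH] Hs x /=; first by move=> ->; case: hP.
move=> [c [y [hy ->]]]; case: hP => _; apply; first by apply: Hs; rewrite inE eqxx.
by apply: IH => // w' h; apply: Hs; rewrite inE h orbT.
Qed.

Lemma lspan_cat s1 s2 x1 x2 : lspan s1 x1 -> lspan s2 x2 -> lspan (s1 ++ s2) (x1 + x2).
Proof.
elim: s1 x1 => [|w s IH] x1 /=; first by move=> -> h; rewrite add0r.
move=> [c [y [hy ->]]] h2; exists c, (y + x2); split; first exact: IH.
by rewrite addrA.
Qed.

Lemma fin_dim_finspan : fin_dim V -> finspan.
Proof.
case=> n [v Hv].
suff [s Hs] : exists s : seq V, forall c : 'I_n -> k, lspan s (\sum_(t < n) c t *: v t).
  by exists s => x; case: (Hv x) => c ->.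
elim: n v {Hv} => [|n IH] v; first by exists [::] => c; rewrite big_ord0.
have [s Hs] := IH (fun t => v (lift ord0 t)).
exists (v ord0 :: s) => c /=; rewrite big_ord_recl.
by exists (c ord0), (\sum_(i < n) c (lift ord0 i) *: v (lift ord0 i)); split=> //; apply: Hs.
Qed.

(* Induction on the spanning list [w :: s]: if some [p0] in [P] lies outside
   the span of [s], subtracting multiples of [p0] moves [P] into
   [P /\ lspan s]. *)
Lemma subspace_finspan s P : subspace P -> (forall x, P x -> lspan s x) ->
  exists g : seq V, (forall w, w \in g -> P w) /\ forall x, P x -> lspan g x.
Proof.
elim: s P => [|w s IH] P hP Hs; first by exists [::]; split=> // x /Hs.
have [Ps|] := classic (forall x, P x -> lspan s x); first exact: IH P hP Ps.
move=> /(not_all_ex_not _ _) [p0 Hp0]; have [Pp0 Np0] := imply_to_and _ _ Hp0.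
have [c0 [y0 [hy0 e0]]] := Hs p0 Pp0.
have c0n : c0 != 0 by apply: contra_notN Np0 => /eqP c00; rewrite e0 c00 scale0r add0r.
pose P' x := P x /\ lspan s x.
have hP' : subspace P'.
  have [L0 L] := lspan_subspace s; have [P0 PL] := hP.
  by split=> // c x y [Px Lx] [Py Ly]; split; [apply: PL | apply: L].
have [g [Hg1 Hg2]] := IH P' hP' (fun x => @proj2 _ _).
exists (p0 :: g); split.
  by move=> w'; rewrite inE => /orP[/eqP -> //|/Hg1 []].
move=> x Px; have [c [y [hy ex]]] := Hs x Px.
exists (c / c0), (x - (c / c0) *: p0); split; last by rewrite addrC subrK.
apply: Hg2; split.
  by apply: (subspaceD hP) => //; rewrite -scaleNr; apply: (subspaceZ hP).
have -> : x - (c / c0) *: p0 = y - (c / c0) *: y0.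
  by rewrite ex e0 scalerDr scalerA mulfVK // opprD addrACA subrr add0r.
have [_ Ls] := lspan_subspace s.
by rewrite -scaleNr addrC; apply: Ls.
Qed.
End Span.

Lemma lspan_map (k : fieldType) (U V : lmodType k) (f : U -> V) (s : seq U) x :
  linear f -> lspan s x -> lspan (map f s) (f x).
Proof.
move=> f_lin; elim: s x => [|w s IH] x /=; first by move=> ->; exact: lin0.
by move=> [c [y [hy ->]]]; exists c, (f y); split; [exact: IH | exact: f_lin].
Qed.

Lemma finspan_lin (k : fieldType) (U V : lmodType k) (f : U -> V) :
  linear f -> (forall y, exists x, f x = y) -> finspan U -> finspan V.
Proof.
move=> f_lin f_surj [s Hs]; exists (map f s) => y.
by have [x <-] := f_surj y; exact: lspan_map.
Qed.

Lemma finspan_prod (k : fieldType) (U V : lmodType k) :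
  finspan U -> finspan V -> finspan (prodL U V).
Proof.
move=> [su Hu] [sv Hv].
have inl_lin : linear (fun x : U => (x, 0) : prodL U V).
  move=> c x y; apply: (@eq_trans _ _ ((c *: x + y, c *: 0 + 0) : prodL U V)) => //.
  by rewrite scaler0 addr0.
have inr_lin : linear (fun y : V => (0, y) : prodL U V).
  move=> c x y; apply: (@eq_trans _ _ ((c *: 0 + 0, c *: x + y) : prodL U V)) => //.
  by rewrite scaler0 addr0.
exists (map (fun x : U => (x, 0) : prodL U V) su ++ map (fun y : V => (0, y) : prodL U V) sv).
move=> [x y]; have -> : ((x, y) : prodL U V) = (x, 0) + (0, y).
  by apply: (@eq_trans _ _ ((x + 0, 0 + y) : prodL U V)) => //; rewrite addr0 add0r.
by apply: lspan_cat; apply: lspan_map.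
Qed.

Lemma Zl_eq0 (k : fieldType) (x : Zl k) : x = 0.
Proof. exact: thinmx0. Qed.

Section KLinearCategory.
Variables (k : fieldType) (C : kcat k).
Hypothesis hC : klinear_cat C.

Lemma compmA (X Y Z W : ob C) (h : hom C Z W) (g : hom C Y Z) (f : hom C X Y) :
  comp h (comp g f) = comp (comp h g) f.
Proof. by case: hC. Qed.

Lemma comp1m (X Y : ob C) (f : hom C X Y) : comp (idm Y) f = f.
Proof. by case: hC => _ []. Qed.

Lemma compm1 (X Y : ob C) (f : hom C X Y) : comp f (idm X) = f.
Proof. by case: hC => _ [_ []]. Qed.

Lemma comp_linl (X Y Z : ob C) (f : hom C X Y) : linear (fun g : hom C Y Z => comp g f).
Proof. by case: hC => _ [_ [_ [H _]]] c g g'; apply: H. Qed.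

Lemma comp_linr (X Y Z : ob C) (g : hom C Y Z) : linear (@comp _ C X Y Z g).
Proof. by case: hC => _ [_ [_ [_ H]]] c f f'; apply: H. Qed.

Lemma comp0m (X Y Z : ob C) (f : hom C X Y) : comp (0 : hom C Y Z) f = 0.
Proof. exact: (lin0 (comp_linl _)). Qed.

Lemma compm0 (X Y Z : ob C) (g : hom C Y Z) : comp g (0 : hom C X Y) = 0.
Proof. exact: (lin0 (comp_linr _)). Qed.

Lemma compmDl (X Y Z : ob C) (g g' : hom C Y Z) (f : hom C X Y) :
  comp (g + g') f = comp g f + comp g' f.
Proof. exact: (linD (comp_linl _)). Qed.

Lemma compmDr (X Y Z : ob C) (g : hom C Y Z) (f f' : hom C X Y) :
  comp g (f + f') = comp g f + comp g f'.
Proof. exact: (linD (comp_linr _)). Qed.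

Lemma compmZl (X Y Z : ob C) (c : k) (g : hom C Y Z) (f : hom C X Y) :
  comp (c *: g) f = c *: comp g f.
Proof. exact: (linZ (comp_linl _)). Qed.

Lemma compmZr (X Y Z : ob C) (c : k) (g : hom C Y Z) (f : hom C X Y) :
  comp g (c *: f) = c *: comp g f.
Proof. exact: (linZ (comp_linr _)). Qed.
End KLinearCategory.

Section ZAlgebraOfSequence.
Variables (k : fieldType) (C : kcat k) (E : int -> ob C).
Hypothesis hC : klinear_cat C.

Local Notation AEc := (AEc E).
Local Notation emb := (@AE_emb _ _ E _ _).
Local Notation toK := (@AE_toK _ _ E _ _).
Local Notation ofK := (@AE_ofK _ _ E).

Lemma idh_id i : idh E i i = idm (E i).
Proof. by rewrite /idh; case: eqP => // e; rewrite (eq_irrelevance e erefl). Qed.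

Lemma idh_neq i j : i != j -> idh E i j = 0.
Proof. by rewrite /idh; case: eqP. Qed.

Lemma AE_toK_lin i j : scalar (@AE_toK _ _ E i j).
Proof.
move=> c; rewrite /AE_toK /AEc; case: (i < j) => a b; first by rewrite mulr0 addr0.
by move: a b; case: (i == j) => a b //; rewrite mulr0 addr0.
Qed.

Lemma AE_toHom_lin i j : linear (@AE_toHom _ _ E i j).
Proof. by move=> c; rewrite /AE_toHom /AEc; case: (i < j) => a b //; rewrite scaler0 addr0. Qed.

Lemma AE_ofHom_lin i j : linear (@AE_ofHom _ _ E i j).
Proof. by move=> c a b; rewrite /AE_ofHom /AEc; case: (i < j); rewrite ?scaler0 ?addr0. Qed.

Lemma AE_emb_lin i j : linear (@AE_emb _ _ E i j).
Proof.
move=> c a b; rewrite /AE_emb (AE_toHom_lin c) (AE_toK_lin c).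
by rewrite scalerDl -scalerA scalerDr addrACA.
Qed.

Lemma AEc_gt0 i j (a : AEc i j) : j < i -> a = 0.
Proof.
move=> lt; move: a; rewrite /AEc ltNge (ltW lt) /= (gt_eqF lt) => a.
exact: Zl_eq0.
Qed.

Lemma AE_embK i j : i < j -> cancel (@AE_emb _ _ E i j) (@AE_ofHom _ _ E i j).
Proof.
move=> lt a; rewrite /AE_emb (idh_neq (negbT (lt_eqF lt))) scaler0 addr0.
by move: a; rewrite /AE_toHom /AE_ofHom /AEc; case: (i < j) lt.
Qed.

Lemma AE_ofHomK i j : i < j -> cancel (@AE_ofHom _ _ E i j) (@AE_emb _ _ E i j).
Proof.
move=> lt h; rewrite /AE_emb (idh_neq (negbT (lt_eqF lt))) scaler0 addr0.
by rewrite /AE_toHom /AE_ofHom /AEc; case: (i < j) lt.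
Qed.

Lemma AE_toK_offdiag i j (a : AEc i j) : i != j -> toK a = 0.
Proof.
move=> ne; move: a; rewrite /AE_toK /AEc (negbTE ne).
by case: (i < j).
Qed.

Lemma AE_ofKK i (a : AEc i i) : ofK i i (toK a) = a.
Proof. by move: a; rewrite /AE_ofK /AE_toK /AEc ltxx eqxx. Qed.

Lemma AE_toK_ofK i c : toK (ofK i i c) = c.
Proof. by rewrite /AE_ofK /AE_toK /AEc ltxx eqxx. Qed.

Lemma AE_emb_diag i (a : AEc i i) : emb a = toK a *: idm (E i).
Proof.
rewrite /AE_emb idh_id; move: a; rewrite /AE_toHom /AE_toK /AEc ltxx eqxx.
by move=> a; rewrite add0r.
Qed.

Lemma AE_toK0 i j : toK (0 : AEc i j) = 0.
Proof. exact: lin0 (@AE_toK_lin i j). Qed.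

Lemma AE_emb0 i j : emb (0 : AEc i j) = 0.
Proof. exact: lin0 (@AE_emb_lin i j). Qed.

Lemma AE_ext i j (a b : AEc i j) : emb a = emb b -> toK a = toK b -> a = b.
Proof.
case: (ltgtP i j) => [lt|gt|eq] eab kab.
- by rewrite -(AE_embK lt a) -(AE_embK lt b) eab.
- by rewrite (AEc_gt0 a gt) (AEc_gt0 b gt).
- by subst j; rewrite -(AE_ofKK a) -(AE_ofKK b) kab.
Qed.

Lemma AE_toK_mul0 i j l (b : AEc j l) (a : AEc i j) : i != l -> toK a * toK b = 0.
Proof.
move=> ne; have [eij|nij] := eqVneq i j; last by rewrite AE_toK_offdiag ?mul0r.
by subst j; rewrite (AE_toK_offdiag b ne) mulr0.
Qed.

Lemma AE_emb_mul0 i j l (b : AEc j l) (a : AEc i j) : l < i -> comp (emb b) (emb a) = 0.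
Proof.
move=> lt; case: (ltP j i) => [ji|ij].
  by rewrite (AEc_gt0 a ji) AE_emb0 (compm0 hC).
by rewrite (AEc_gt0 b (lt_le_trans lt ij)) AE_emb0 (comp0m hC).
Qed.

Lemma AE_emb_mul i j l (b : AEc j l) (a : AEc i j) :
  emb (AE_mul b a) = comp (emb b) (emb a).
Proof.
rewrite /AE_mul; case: ltgtP => [lt|gt|eq]; first exact: AE_ofHomK.
  by rewrite (AEc_gt0 (ofK i l _) gt) AE_emb0 AE_emb_mul0.
subst l; rewrite AE_emb_diag AE_toK_ofK.
case: (ltgtP i j) => [ij|ji|eij].
- by rewrite (AEc_gt0 b ij) AE_toK0 AE_emb0 (comp0m hC) mulr0 scale0r.
- by rewrite (AEc_gt0 a ji) AE_toK0 AE_emb0 (compm0 hC) mul0r scale0r.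
- subst j; rewrite !AE_emb_diag (compmZl hC) (compmZr hC) (comp1m hC).
  by rewrite scalerA mulrC.
Qed.

Lemma AE_toK_mul i j l (b : AEc j l) (a : AEc i j) : toK (AE_mul b a) = toK a * toK b.
Proof.
rewrite /AE_mul; case: ltgtP => [lt|gt|eq]; last by subst l; rewrite AE_toK_ofK.
  by have ne := negbT (lt_eqF lt); rewrite (AE_toK_offdiag _ ne) (AE_toK_mul0 _ _ ne).
by have ne := negbT (gt_eqF gt); rewrite (AE_toK_offdiag _ ne) (AE_toK_mul0 _ _ ne).
Qed.

Lemma AE_emb_one i : emb (ofK i i 1) = idm (E i).
Proof. by rewrite AE_emb_diag AE_toK_ofK scale1r. Qed.

Lemma AE_scale_one i (a : AEc i i) : a = toK a *: ofK i i 1.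
Proof.
apply: AE_ext; first by rewrite (linZ (@AE_emb_lin i i)) AE_emb_one AE_emb_diag.
by rewrite (linZ (@AE_toK_lin i i)) /= AE_toK_ofK mulr1.
Qed.

Lemma AE_mul_linr i j l (b : AEc j l) : linear (@AE_mul _ _ E i j l b).
Proof.
move=> c a a'; apply: AE_ext.
  by rewrite (AE_emb_lin c) !AE_emb_mul (AE_emb_lin c) (comp_linr hC _ c).
by rewrite (AE_toK_lin c) !AE_toK_mul (AE_toK_lin c) mulrDl mulrA.
Qed.

Lemma AE_mul_linl i j l (a : AEc i j) : linear (fun b : AEc j l => AE_mul b a).
Proof.
move=> c b b'; apply: AE_ext.
  by rewrite (AE_emb_lin c) !AE_emb_mul (AE_emb_lin c) (comp_linl hC _ c).
by rewrite (AE_toK_lin c) !AE_toK_mul (AE_toK_lin c) mulrDr mulrCA.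
Qed.

Lemma AE_mulA i j l p (g : AEc l p) (b : AEc j l) (a : AEc i j) :
  AE_mul (AE_mul g b) a = AE_mul g (AE_mul b a).
Proof.
apply: AE_ext; first by rewrite !AE_emb_mul (compmA hC).
by rewrite !AE_toK_mul mulrA.
Qed.

Lemma AE_mul1r i j (a : AEc i j) : AE_mul (ofK j j 1) a = a.
Proof.
apply: AE_ext; first by rewrite AE_emb_mul AE_emb_one (comp1m hC).
by rewrite AE_toK_mul AE_toK_ofK mulr1.
Qed.

Lemma AE_mulr1 i j (a : AEc i j) : AE_mul a (ofK i i 1) = a.
Proof.
apply: AE_ext; first by rewrite AE_emb_mul AE_emb_one (compm1 hC).
by rewrite AE_toK_mul AE_toK_ofK mul1r.
Qed.
End ZAlgebraOfSequence.
Arguments AE_emb : simpl never.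

Section ModuleAxioms.
Variables (k : fieldType) (C : kcat k) (E : int -> ob C).
Local Notation A := (AE E).

Definition module_axioms (M : zmod A) : Prop :=
  [/\ forall i j (g : mc M j), linear (fun a : AEc E i j => act g a),
      forall i j (a : AEc E i j), {morph (fun g : mc M j => act g a) : g h / g + h},
      forall i j l (g : mc M l) (b : AEc E j l) (a : AEc E i j),
        act (act g b) a = act g (AE_mul b a)
    & forall i (g : mc M i), act g (AE_ofK E i i 1) = g].

Section ActionLaws.
Variables (M : zmod A) (hM : module_axioms M).

Lemma act_linr i j (g : mc M j) : linear (fun a : AEc E i j => act g a).
Proof. by case: hM. Qed.

Lemma actDl i j (a : AEc E i j) : {morph (fun g : mc M j => act g a) : g h / g + h}.
Proof. by case: hM. Qed.

Lemma actA i j l (g : mc M l) (b : AEc E j l) (a : AEc E i j) :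
  act (act g b) a = act g (AE_mul b a).
Proof. by case: hM. Qed.

Lemma act1 i (g : mc M i) : act g (AE_ofK E i i 1) = g.
Proof. by case: hM. Qed.

Lemma act0r i j (g : mc M j) : act g (0 : AEc E i j) = 0.
Proof. exact: lin0 (act_linr g). Qed.

Lemma act0l i j (a : AEc E i j) : act (0 : mc M j) a = 0.
Proof. by apply: (addrI (act (0 : mc M j) a)); rewrite -actDl !addr0. Qed.
End ActionLaws.

Lemma zhom_lin (M N : zmod A) (phi : zhom M N) (hphi : is_zhom phi) i :
  linear (@hf _ _ _ _ phi i).
Proof. by case: hphi => H _ c; apply: H. Qed.

Lemma zhom_act (M N : zmod A) (phi : zhom M N) (hphi : is_zhom phi)
    i j (x : mc M j) (a : AEc E i j) :
  hf phi (act x a) = act (hf phi x) a.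
Proof. by case: hphi => _; apply. Qed.

Fixpoint dtuple (F : int -> Type) (js : seq int) : Type :=
  if js is j :: js' then (F j * dtuple F js')%type else unit.

Fixpoint free_eval (M : zmod A) (js : seq int) :
    dtuple (@mc _ _ M) js -> forall i, mc (Pfree A js) i -> mc M i :=
  match js with
  | [::] => fun _ i _ => 0
  | j :: js' => fun g i x => act g.1 x.1 + @free_eval M js' g.2 i x.2
  end.

Definition free_hom (M : zmod A) js (g : dtuple (@mc _ _ M) js) : zhom (Pfree A js) M :=
  ZHom (free_eval g).

Lemma free_hom_zhom M (hM : module_axioms M) js (g : dtuple (@mc _ _ M) js) :
  is_zhom (free_hom g).
Proof.
rewrite /free_hom; elim: js g => [|j js IH] g /=.
  by split=> /= [*|i j x a]; rewrite ?scaler0 ?addr0 ?act0l.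
case: (IH g.2) => /= I1 I2; split=> /= [i c x y|i l x a].
  by rewrite (act_linr hM) I1 scalerDr addrACA.
by rewrite (actDl hM) (actA hM) I2.
Qed.

Lemma free_eval_lin M (hM : module_axioms M) js (g : dtuple (@mc _ _ M) js) i :
  linear (@free_eval M js g i).
Proof. exact: (zhom_lin (free_hom_zhom hM g)). Qed.

End ModuleAxioms.
Arguments zhom_lin {k C E M N phi} hphi {i}.
Arguments free_eval_lin {k C E M} hM {js} g {i}.

Section FreeModules.
Variables (k : fieldType) (C : kcat k) (E : int -> ob C).
Hypothesis hC : klinear_cat C.
Local Notation A := (AE E).

Lemma Pmod_axioms j : module_axioms (Pmod A j).
Proof.
split=> /= [i l g | i l a g h | *| *]; [exact: AE_mul_linr | | exact: AE_mulA | exact: AE_mulr1].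
by have := AE_mul_linl hC a 1 g h; rewrite !scale1r.
Qed.

Lemma zero_mod_axioms : module_axioms (zero_mod A).
Proof.
split=> /= [i j g c a b|i j a g h|//|i g]; rewrite ?scaler0 ?addr0 //.
exact/esym/Zl_eq0.
Qed.

Lemma sum_mod_axioms (M N : zmod A) :
  module_axioms M -> module_axioms N -> module_axioms (sum_mod M N).
Proof.
case=> M1 M2 M3 M4 [N1 N2 N3 N4].
by split=> /= [i j g c a b|i j a g h|*|i [g1 g2]]; rewrite ?M1 ?N1 ?M2 ?N2 ?M3 ?N3 ?M4 ?N4.
Qed.

Lemma Pfree_axioms js : module_axioms (Pfree A js).
Proof.
elim: js => [|j js IH]; first exact: zero_mod_axioms.
exact: sum_mod_axioms (Pmod_axioms j) IH.
Qed.

Lemma Pfree_pair_eq j js i (a a' : AEc E i j) (x x' : mc (Pfree A js) i) :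
  a = a' -> x = x' -> ((a, x) : mc (Pfree A (j :: js)) i) = (a', x').
Proof. by move=> -> ->. Qed.

Lemma zhom_free_eval M (hM : module_axioms M) js (phi : zhom (Pfree A js) M) :
  is_zhom phi -> exists g, forall i (x : mc (Pfree A js) i), hf phi x = free_eval g x.
Proof.
elim: js phi => [|j js IH] phi hphi.
  by exists tt => i x; rewrite (Zl_eq0 x) /= (lin0 (zhom_lin hphi)).
pose phi' := @ZHom _ _ (Pfree A js) M (fun i (y : mc (Pfree A js) i) =>
   hf phi ((0, y) : mc (Pfree A (j :: js)) i)).
have hphi' : is_zhom phi'.
  case: hphi => phi_lin phi_act; split=> /= [i c x y|i l x a].
    rewrite -phi_lin; congr (hf phi _).
    by apply: (@Pfree_pair_eq j js i 0 (c *: 0 + 0)); rewrite ?scaler0 ?addr0.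
  rewrite -phi_act; congr (hf phi _).
  apply: (@Pfree_pair_eq j js i 0 (AE_mul 0 a)) => //.
  by rewrite -(lin0 (AE_mul_linl hC a)).
have [g' Hg'] := IH phi' hphi'.
exists (hf phi ((AE_ofK E j j 1, 0) : mc (Pfree A (j :: js)) j), g') => i [x1 x2] /=.
have -> : ((x1, x2) : mc (Pfree A (j :: js)) i) =
    act ((AE_ofK E j j 1, 0) : mc (Pfree A (j :: js)) j) x1 + (0, x2).
  apply: (@eq_trans _ _ ((AE_mul (AE_ofK E j j 1) x1 + 0,
                           act (0 : mc (Pfree A js) j) x1 + x2) : mc (Pfree A (j :: js)) i)) => //.
  by apply: Pfree_pair_eq; rewrite ?(AE_mul1r hC) ?(act0l (Pfree_axioms js)) ?addr0 ?add0r.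
by rewrite (linD (zhom_lin hphi)) (zhom_act hphi) -Hg'.
Qed.
End FreeModules.

Section Generation.
Variables (k : fieldType) (C : kcat k) (E : int -> ob C) (M : zmod (AE E)).
Hypothesis hM : module_axioms M.
Local Notation A := (AE E).
Local Notation gens := (seq {j : int & mc M j}).

Definition graded_submod (S : forall i, mc M i -> Prop) : Prop :=
  [/\ forall i, S i 0,
      forall i c (y y' : mc M i), S i y -> S i y' -> S i (c *: y + y')
    & forall i j (y : mc M j) (a : AEc E i j), S j y -> S i (act y a)].

Definition gens_within (G : gens) (S : forall i, mc M i -> Prop) : Prop :=
  forall g, g \in G -> S (tag g) (tagged g).

Lemma submodD S : graded_submod S -> forall i (y y' : mc M i), S i y -> S i y' -> S i (y + y').
Proof. by case=> _ H _ i y y' Sy Sy'; have := H i 1 y y' Sy Sy'; rewrite scale1r. Qed.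

Lemma submod_sum S : graded_submod S ->
  forall i n (F : 'I_n -> mc M i), (forall t, S i (F t)) -> S i (\sum_(t < n) F t).
Proof.
move=> hS i n F SF; elim/big_rec: _ => [|t y _ Sy]; first by case: hS.
exact: submodD.
Qed.

Fixpoint dtuple_of (G : gens) : dtuple (@mc _ _ M) (map tag G) :=
  if G is g :: G' then (tagged g, dtuple_of G') else tt.

Definition gen_by (G : gens) i (y : mc M i) : Prop :=
  exists x : mc (Pfree A (map tag G)) i, free_eval (dtuple_of G) x = y.

Lemma gen_by_submod G : graded_submod (gen_by G).
Proof.
have [lin acts] := free_hom_zhom hM (dtuple_of G).
split=> [i|i c y y' [x <-] [x' <-]|i j y a [x <-]].
- by exists 0; exact: lin0 (free_eval_lin hM _).
- by exists (c *: x + x'); exact: lin.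
- by exists (act x a); exact: acts.
Qed.

Lemma gen_by_gen G : gens_within G (gen_by G).
Proof.
elim: G => [|g' G IH] g //; rewrite inE => /orP[/eqP ->|/IH [x Hx]].
  exists ((AE_ofK E (tag g') (tag g') 1, 0) : mc (Pfree A (map tag (g' :: G))) (tag g')).
  by rewrite /= (lin0 (free_eval_lin hM _)) addr0 (act1 hM).
exists ((0, x) : mc (Pfree A (map tag (g' :: G))) (tag g)).
by rewrite /= Hx (act0r hM) add0r.
Qed.

Lemma gen_by_min G S : graded_submod S -> gens_within G S ->
  forall i (y : mc M i), gen_by G y -> S i y.
Proof.
move=> hS; elim: G => [|g G IH] HG i y [x <-] /=; first by case: hS.
apply: submodD => //; first by case: hS => _ _; apply; apply: HG; rewrite inE eqxx.
by apply: IH; [move=> g' Hg'; apply: HG; rewrite inE Hg' orbT | exists x.2].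
Qed.

Lemma gen_by_sub G1 G2 : {subset G1 <= G2} -> forall i (y : mc M i), gen_by G1 y -> gen_by G2 y.
Proof.
move=> sub12; apply: gen_by_min; first exact: gen_by_submod.
by move=> g /sub12; apply: gen_by_gen.
Qed.

Lemma fg_sub_gen_by G S : graded_submod S -> gens_within G S ->
  (forall i (y : mc M i), S i y -> gen_by G y) -> fg_sub S.
Proof.
move=> hS GS SG; exists (map tag G), (free_hom (dtuple_of G)).
split=> [|i y]; first exact: free_hom_zhom.
by split=> [/SG|[x Hx]] //; apply: (gen_by_min hS GS); exists x.
Qed.

Lemma fin_gen_cyclic j (g : mc M j) :
  (forall i (y : mc M i), exists a : AEc E i j, y = act g a) -> fin_gen M.
Proof.
move=> g_gen; pose G := [:: Tagged (@mc _ _ M) g].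
apply: (fg_sub_gen_by (G := G)) => // i y _.
have [a ->] := g_gen i y; have [_ _ G_act] := gen_by_submod G.
by apply: G_act; apply: (@gen_by_gen G (Tagged (@mc _ _ M) g)); rewrite mem_head.
Qed.

Definition submod_gen (T : forall i, mc M i -> Prop) i (y : mc M i) : Prop :=
  forall S, graded_submod S -> (forall j z, T j z -> S j z) -> S i y.

Lemma submod_gen_submod T : graded_submod (submod_gen T).
Proof.
split=> [i S [S0 _ _] _ //|i c y y' Ty Ty' S hS TS|i j y a Ty S hS TS].
  by case: (hS) => _ SL _; apply: SL; [apply: Ty | apply: Ty'].
by case: (hS) => _ _ SA; apply: SA; apply: Ty.
Qed.

Lemma submod_gen_sub T j (z : mc M j) : T j z -> submod_gen T z.
Proof. by move=> Tz S _; apply. Qed.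

Lemma submod_gen_mono (T T' : forall i, mc M i -> Prop) :
  (forall j z, T j z -> T' j z) -> forall i (y : mc M i), submod_gen T y -> submod_gen T' y.
Proof. by move=> TT' i y Ty S hS T'S; apply: Ty => // j z /TT'/T'S. Qed.

Lemma gen_by_degrees (fin : forall i, finspan (mc M i)) S (hS : graded_submod S) lo (n : nat) :
  exists G, gens_within G S /\
    forall i (y : mc M i), lo <= i < lo + n%:Z -> S i y -> gen_by G y.
Proof.
elim: n => [|n [G [GS SG]]]; first by exists [::]; split=> // i y; lia.
pose i0 := lo + n%:Z.
have hS0 : subspace (S i0) by case: hS => S0 SL _; split; [apply: S0 | apply: SL].
have [ws Hws] := fin i0.
have [gs [gsS Sgs]] := subspace_finspan hS0 (fun x _ => Hws x).
pose G0 := [seq Tagged (@mc _ _ M) w | w <- gs].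
have G0S : gens_within G0 S by move=> _ /mapP[w /gsS Sw ->].
exists (G0 ++ G); split=> [g|i y lohi Sy].
  by rewrite mem_cat => /orP[/G0S|/GS].
have [e|ne] := eqVneq i i0.
  subst i; apply: (gen_by_sub (G1 := G0)) => [g|]; first by rewrite mem_cat => ->.
  apply: (lspan_min _ _ (Sgs y Sy)) => [|w gw].
    by case: (gen_by_submod G0) => G00 G0L _; split; [apply: G00 | apply: G0L].
  exact: (@gen_by_gen G0 (Tagged (@mc _ _ M) w) (map_f _ gw)).
apply: (gen_by_sub (G1 := G)) => [g|]; first by rewrite mem_cat orbC => ->.
by apply: SG => //; move/eqP: ne; rewrite /i0; lia.
Qed.

Lemma fg_sub_window (fin : forall i, finspan (mc M i)) S (hS : graded_submod S) lo hi :
  (forall i (y : mc M i), hi < i -> S i y -> y = 0) ->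
  (forall i (y : mc M i), i < lo -> S i y ->
     submod_gen (fun j z => lo <= j <= hi /\ S j z) y) ->
  fg_sub S.
Proof.
move=> Shigh Slow.
have [G [GS SG]] := gen_by_degrees fin hS lo `|hi - lo|.+1.
have windowG j (z : mc M j) : lo <= j <= hi -> S j z -> gen_by G z.
  by move=> lohi; apply: SG; lia.
apply: (fg_sub_gen_by hS GS) => i y Sy.
case: (ltP i lo) => [ilo|loi].
  by apply: (Slow _ _ ilo Sy); [exact: gen_by_submod | move=> j z []; apply: windowG].
case: (leP i hi) => [ihi|hii]; first by apply: windowG => //; rewrite loi ihi.
by rewrite (Shigh _ _ hii Sy); case: (gen_by_submod G).
Qed.
End Generation.

Lemma zhom_ker_submod (k : fieldType) (C : kcat k) (E : int -> ob C) (M N : zmod (AE E))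
    (hN : module_axioms N) (phi : zhom M N) :
  is_zhom phi -> graded_submod (fun i (x : mc M i) => hf phi x = 0).
Proof.
move=> hphi; split=> [i|i c y y' Sy Sy'|i j y a Sy].
- exact: lin0 (zhom_lin hphi).
- by rewrite (zhom_lin hphi) Sy Sy' scaler0 addr0.
- by rewrite (zhom_act hphi) Sy (act0l hN).
Qed.

Section FreeModulesInC.
Variables (k : fieldType) (C : kcat k) (E : int -> ob C).
Hypothesis hAb : abelian C.
Local Notation A := (AE E).

Let hC : klinear_cat C. Proof. by case: hAb. Qed.

Fixpoint hom_eval (X : ob C) (js : seq int) :
    dtuple (fun j => hom C (E j) X) js -> forall i, mc (Pfree A js) i -> hom C (E i) X :=
  match js with
  | [::] => fun _ i _ => 0
  | j :: js' => fun y i x => comp y.1 (AE_emb x.1) + @hom_eval X js' y.2 i x.2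
  end.

(* [S] is the biproduct of the [E j], [j \in js]: in every degree [i] below all
   of [js], [Phi] identifies [Pfree js] with [Hom(E_i, S)], because
   [A_ij = Hom(E_i, E_j)] for [i < j]. *)
Lemma Pfree_biproduct js :
  exists (S : ob C) (Phi : forall i, mc (Pfree A js) i -> hom C (E i) S)
         (Psi : forall i, hom C (E i) S -> mc (Pfree A js) i)
         (Lam : forall X, dtuple (fun j => hom C (E j) X) js -> hom C S X),
  [/\ forall i, linear (Phi i),
      forall i j (x : mc (Pfree A js) j) (a : AEc E i j),
        Phi i (act x a) = comp (Phi j x) (AE_emb a),
      forall i, all (fun j => i < j) js -> cancel (Phi i) (Psi i) /\ cancel (Psi i) (Phi i)
    & forall X y i (x : mc (Pfree A js) i), comp (Lam X y) (Phi i x) = hom_eval y x].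
Proof.
case: hAb => _ [[Z HZ] [Hbi _]].
elim: js => [|j js [S' [Phi' [Psi' [Lam' [P1 P2 P3 P4]]]]]].
  exists Z, (fun i _ => 0), (fun i _ => 0), (fun X _ => 0); split=> //.
  - by move=> i c x y; rewrite scaler0 addr0.
  - by move=> *; rewrite (comp0m hC).
  - by move=> i _; split=> [x|g]; [rewrite (Zl_eq0 x) | case: (HZ (E i)) => H _; apply: H].
  - by move=> *; rewrite (comp0m hC).
have [B [i1 [i2 [p1 [p2 [e11 e22 e12 e21 eid]]]]]] := Hbi (E j) S'.
exists B, (fun i (x : mc (Pfree A (j :: js)) i) => comp i1 (AE_emb x.1) + comp i2 (Phi' i x.2)),
  (fun i (g : hom C (E i) B) => ((@AE_ofHom _ _ E i j (comp p1 g), Psi' i (comp p2 g))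
                                  : mc (Pfree A (j :: js)) i)),
  (fun X (y : dtuple (fun j => hom C (E j) X) (j :: js)) => comp y.1 p1 + comp (Lam' X y.2) p2).
have p1i2 i (h : hom C (E i) S') : comp p1 (comp i2 h) = 0.
  by rewrite (compmA hC) e12 (comp0m hC).
have p2i1 i (h : hom C (E i) (E j)) : comp p2 (comp i1 h) = 0.
  by rewrite (compmA hC) e21 (comp0m hC).
have p1i1 i (h : hom C (E i) (E j)) : comp p1 (comp i1 h) = h.
  by rewrite (compmA hC) e11 (comp1m hC).
have p2i2 i (h : hom C (E i) S') : comp p2 (comp i2 h) = h.
  by rewrite (compmA hC) e22 (comp1m hC).
split=> /=.
- move=> i c x y /=.
  by rewrite (AE_emb_lin c) (P1 i c) !(comp_linr hC _ c) scalerDr addrACA.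
- by move=> i l x a; rewrite (AE_emb_mul hC) P2 (compmDl hC) !(compmA hC).
- move=> i /andP[lij /P3[Q1 Q2]]; split=> [[x1 x2]|g] /=.
    rewrite (compmDr hC p1) (compmDr hC p2) p1i1 p1i2 p2i1 p2i2 addr0 add0r (AE_embK lij) Q1.
    by [].
  rewrite (AE_ofHomK lij) Q2 !(compmA hC) -(compmDl hC) eid (comp1m hC).
  by [].
- move=> X y i x /=.
  rewrite (compmDl hC) (compmDr hC (comp y.1 p1)) (compmDr hC (comp (Lam' X y.2) p2)).
  rewrite -!(compmA hC) p1i1 p1i2 p2i1 p2i2.
  by rewrite !(compm0 hC) addr0 add0r P4.
Qed.

Lemma Pfree_high0 js i (x : mc (Pfree A js) i) : all (fun j => j < i) js -> x = 0.
Proof.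
elim: js x => [|j js IH] x /=; first by rewrite (Zl_eq0 x).
case/andP=> ji js_lt; case: x => x1 x2.
apply: (@eq_trans _ _ ((0, 0) : mc (Pfree A (j :: js)) i)) => //.
by rewrite (AEc_gt0 x1 ji) (IH x2 js_lt).
Qed.

Hypothesis hE : homfin_seq E.

Lemma AE_finspan i j : finspan (AEc E i j).
Proof.
case: (ltgtP i j) => [lt|gt|<-].
- apply: (finspan_lin (@AE_ofHom_lin _ _ E i j)); last exact: fin_dim_finspan.
  by move=> a; exists (AE_emb a); exact: AE_embK.
- by exists [::] => a; rewrite /= (AEc_gt0 a gt).
- exists [:: AE_ofK E i i 1] => a /=.
  by exists (AE_toK a), 0; split=> //; rewrite addr0 -AE_scale_one.
Qed.

Lemma Pfree_finspan js i : finspan (mc (Pfree A js) i).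
Proof.
elim: js => [|j js IH]; first by exists [::] => x; exact: Zl_eq0.
exact: (finspan_prod (AE_finspan i j) IH).
Qed.
End FreeModulesInC.

Lemma int_seq_lower_bound (s : seq int) : exists b, all (fun j => b <= j) s.
Proof.
elim: s => [|j s [b hb]]; first by exists 0.
exists (Order.min b j) => /=; rewrite ge_min lexx orbT /=.
by apply/allP => x /(allP hb) bx; rewrite ge_min bx.
Qed.

Lemma int_seq_upper_bound (s : seq int) : exists b, all (fun j => j <= b) s.
Proof.
elim: s => [|j s [b hb]]; first by exists 0.
exists (Order.max b j) => /=; rewrite le_max lexx orbT /=.
by apply/allP => x /(allP hb) xb; rewrite le_max xb.
Qed.

Lemma coherent_hom_image_gen (k : fieldType) (C : kcat k) (E : int -> ob C)
    (hC : klinear_cat C) (hcoh : coherent_seq E) (M : zmod (AE E)) (K : ob C) (b : int)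
    (R : forall i, hom C (E i) K -> mc M i) :
  (forall i, i < b -> linear (R i)) ->
  (forall i j (v : hom C (E j) K) (h : hom C (E i) (E j)), i < j < b ->
     R i (comp v h) = act (R j v) (@AE_ofHom _ _ E i j h)) ->
  exists2 lo, lo <= b & forall i (v : hom C (E i) K), i < lo ->
    submod_gen (fun j z => lo <= j < b /\ exists w, z = R j w) (R i v).
Proof.
move=> R_lin R_comp; have [s [s_le [n Hn]]] := hcoh.2 K (b - 1).
have [lo /and3P[lon lob los]] := int_seq_lower_bound [:: n, b & s].
exists lo => // i v ilo; have [N [ts [fs [hs [ts_s ->]]]]] := Hn i (lt_le_trans ilo lon) v.
set W := fun j z => _; have [_ _ W_act] := submod_gen_submod W.
rewrite (lin_sum (R_lin i (lt_le_trans ilo lob))).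
apply: (submod_sum (submod_gen_submod W)) => t.
have lo_ts : lo <= ts t := allP los _ (ts_s t).
have ts_b : ts t < b by have := allP s_le _ (ts_s t); lia.
rewrite R_comp; last by rewrite ts_b andbT; lia.
by apply: W_act; apply: submod_gen_sub; split; [rewrite lo_ts | exists (fs t)].
Qed.

Fixpoint dtuple_map (F G : int -> Type) (f : forall j, F j -> G j) js :
    dtuple F js -> dtuple G js :=
  if js is j :: js' then fun t => (f j t.1, @dtuple_map F G f js' t.2) else fun _ => tt.

Section Embedding.
Variables (k : fieldType) (C : kcat k) (E : int -> ob C).
Local Notation A := (AE E).

Definition embeds_in_hom (M : zmod A) (X : ob C) (n0 : int)
    (rho : forall i, mc M i -> hom C (E i) X) : Prop :=
  [/\ forall i, linear (rho i),
      forall i (y : mc M i), i < n0 -> rho i y = 0 -> y = 0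
    & forall i j (g : mc M j) (a : AEc E i j), i < n0 ->
        rho i (act g a) = comp (rho j g) (AE_emb a)].

Lemma embeds_free_eval M X n0 rho (hr : @embeds_in_hom M X n0 rho)
    js (g : dtuple (@mc _ _ M) js) i (x : mc (Pfree A js) i) :
  i < n0 -> rho i (free_eval g x) = hom_eval (dtuple_map rho g) x.
Proof.
case: hr => rho_lin _ rho_act lt.
elim: js g x => [|j js IH] g x /=; first exact: lin0 (rho_lin i).
by rewrite (linD (rho_lin i)) rho_act // IH.
Qed.
End Embedding.
Arguments embeds_in_hom {k C E} M X n0 rho.

Section KernelsAreFinitelyGenerated.
Variables (k : fieldType) (C : kcat k) (E : int -> ob C).
Hypotheses (hAb : abelian C) (hE : homfin_seq E) (hcoh : coherent_seq E).
Local Notation A := (AE E).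
Let hC : klinear_cat C. Proof. by case: hAb. Qed.

Variables (M : zmod A) (X : ob C) (n0 : int) (rho : forall i, mc M i -> hom C (E i) X).
Hypotheses (hM : module_axioms M) (hr : embeds_in_hom M X n0 rho).

Lemma ker_fg_of_embedding js (phi : zhom (Pfree A js) M) :
  is_zhom phi -> fg_sub (fun i (x : mc (Pfree A js) i) => hf phi x = 0).
Proof.
move=> hphi; set S := fun i x => _; have hS : graded_submod S := zhom_ker_submod hM hphi.
have [B [Phi [Psi [Lam [Phi_lin Phi_act PhiK Lam_eval]]]]] := Pfree_biproduct E hAb js.
have [g phi_g] := zhom_free_eval hC hM hphi.
pose f := Lam X (dtuple_map rho g).
have [b /andP[bn0 bjs]] := int_seq_lower_bound (n0 :: js).
have PhiKb i : i < b -> cancel (Phi i) (Psi i) /\ cancel (Psi i) (Phi i).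
  by move=> ib; apply: PhiK; apply/allP => j /(allP bjs); lia.
have kerP i x : i < b -> S i x <-> comp f (Phi i x) = 0.
  move=> ib; have in0 : i < n0 by lia.
  case: hr => rho_lin rho_inj _.
  rewrite /S Lam_eval -(embeds_free_eval hr g x in0) -phi_g.
  by split=> [->|/(rho_inj _ _ in0)//]; exact: lin0 (rho_lin i).
have [K [u [fu0 u_univ]]] : exists K (u : hom C K B), is_kernel f u.
  by case: hAb => _ [_ [_ [Hker _]]]; apply: Hker.
pose R i (w : hom C (E i) K) := Psi i (comp u w).
have R_lin i : i < b -> linear (R i).
  move=> ib c v w; apply: (can_inj (PhiKb i ib).1).
  by rewrite /R (Phi_lin i c) !(PhiKb i ib).2 (comp_linr hC u c).
have R_comp i j v h : i < j < b -> R i (comp v h) = act (R j v) (@AE_ofHom _ _ E i j h).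
  case/andP=> ij jb; have ib := lt_trans ij jb; apply: (can_inj (PhiKb i ib).1).
  by rewrite /R Phi_act (PhiKb i ib).2 (PhiKb j jb).2 (AE_ofHomK ij) (compmA hC).
have [lo lob lowgen] := coherent_hom_image_gen hC hcoh R_lin R_comp.
have [hi /andP[bhi hijs]] := int_seq_upper_bound (b :: js).
apply: (fg_sub_window (Pfree_axioms E hC js) (Pfree_finspan hE js) hS (lo := lo) (hi := hi)).
  by move=> i x hii _; apply: Pfree_high0; apply/allP => j /(allP hijs); lia.
move=> i x ilo Sx; have ib := lt_le_trans ilo lob.
have [v [uv _]] := u_univ _ (Phi i x) ((kerP i x ib).1 Sx).
have -> : x = R i v by rewrite /R uv (PhiKb i ib).1.
apply: submod_gen_mono (lowgen i v ilo) => j _ [/andP[loj jb] [w ->]].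
split; first by rewrite loj /=; lia.
by apply/kerP => //; rewrite /R (PhiKb j jb).2 (compmA hC) fu0 (comp0m hC).
Qed.

Lemma coherent_of_embedding : fin_gen M -> coherent_mod M.
Proof. by move=> fgM; split=> // js phi; apply: ker_fg_of_embedding. Qed.
End KernelsAreFinitelyGenerated.

Section Gamma.
Variables (k : fieldType) (C : kcat k) (E : int -> ob C).
Hypothesis hC : klinear_cat C.
Variables (X : ob C) (m : int).
Local Notation Gm := (Gamma_le E m X).
Local Notation GT := (@G_to _ _ E X m _).
Local Notation GO := (@G_of _ _ E X m _).

Lemma G_toK i : i <= m -> cancel (@G_to _ _ E X m i) (@G_of _ _ E X m i).
Proof. by rewrite /G_of /G_to /Gc; case: (i <= m). Qed.

Lemma G_ofK i : i <= m -> cancel (@G_of _ _ E X m i) (@G_to _ _ E X m i).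
Proof. by rewrite /G_of /G_to /Gc; case: (i <= m). Qed.

Lemma Gc_gt0 i (x : Gc E X m i) : m < i -> x = 0.
Proof. by move=> lt; move: x; rewrite /Gc leNgt lt => x; exact: Zl_eq0. Qed.

Lemma G_to_lin i : linear (@G_to _ _ E X m i).
Proof. by rewrite /G_to /Gc; case: (i <= m) => // c x y; rewrite scaler0 addr0. Qed.

Lemma G_of_lin i : linear (@G_of _ _ E X m i).
Proof. by rewrite /G_of /Gc; case: (i <= m) => // c x y; rewrite scaler0 addr0. Qed.

Lemma G_ofK_comp i j (x : Gc E X m j) (a : AEc E i j) :
  GT (GO (comp (GT x) (AE_emb a)) : Gc E X m i) = comp (GT x) (AE_emb a).
Proof.
case: (leP i m) => [im|mi]; first by rewrite G_ofK.
rewrite [GO _](Gc_gt0 _ mi) (lin0 (@G_to_lin i)).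
case: (leP j m) => [jm|mj]; last by rewrite (Gc_gt0 x mj) (lin0 (@G_to_lin j)) (comp0m hC).
by rewrite (AEc_gt0 a (le_lt_trans jm mi)) AE_emb0 (compm0 hC).
Qed.

Lemma Gamma_axioms : module_axioms Gm.
Proof.
split=> /= [i j g c a b|i j a g h|i j l g b a|i g].
- by rewrite (AE_emb_lin c) (comp_linr hC _ c) (@G_of_lin i c).
- by rewrite (linD (@G_to_lin j)) (compmDl hC) (linD (@G_of_lin i)).
- by rewrite G_ofK_comp -(compmA hC) (AE_emb_mul hC).
- rewrite AE_emb_one (compm1 hC); case: (leP i m) => [im|mi]; first by rewrite G_toK.
  by rewrite (Gc_gt0 g mi) (lin0 (@G_to_lin i)) (lin0 (@G_of_lin i)).
Qed.

Lemma Gamma_embeds : embeds_in_hom Gm X (m + 1) (fun i x => GT x).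
Proof.
split=> [i|i y lt y0|i j g a lt] /=; first exact: G_to_lin.
  by rewrite -(G_toK _ y) ?y0 ?(lin0 (@G_of_lin i)) //; lia.
by rewrite G_ofK //; lia.
Qed.

Hypotheses (hE : homfin_seq E) (hcoh : coherent_seq E).

Lemma Gamma_fin_gen : fin_gen Gm.
Proof.
have hT : graded_submod (fun i (y : mc Gm i) => True) by [].
have fin i : finspan (mc Gm i).
  case: (leP i m) => [im|mi]; last by exists [::] => x; exact: Gc_gt0.
  apply: (finspan_lin (@G_of_lin i)); last exact: fin_dim_finspan.
  by move=> y; exists (GT y); exact: G_toK.
have R_comp i j (v : hom C (E j) X) h : i < j < m + 1 ->
    GO (comp v h) = act (GO v : mc Gm j) (@AE_ofHom _ _ E i j h).
  by case/andP=> ij jm; rewrite /= G_ofK ?AE_ofHomK //; lia.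
have [lo lom lowgen] := coherent_hom_image_gen hC hcoh (M := Gm) (R := fun i => @G_of _ _ E X m i)
  (fun i _ => @G_of_lin i) R_comp.
apply: (fg_sub_window Gamma_axioms fin hT (lo := lo) (hi := m)) => [i y mi _|i y ilo _].
  exact: Gc_gt0.
have im : i <= m by lia.
rewrite -(G_toK im y); apply: submod_gen_mono (lowgen i (GT y) ilo) => j z [/andP[loj jm] _].
by split=> //; rewrite loj /=; lia.
Qed.
End Gamma.

Section ProjectivesAndSimples.
Variables (k : fieldType) (C : kcat k) (E : int -> ob C).
Hypothesis hC : klinear_cat C.
Local Notation A := (AE E).

Lemma Pmod_embeds j : embeds_in_hom (Pmod A j) (E j) j (fun i (a : AEc E i j) => AE_emb a).
Proof.
split=> [i|i y lt y0|i l g a _] /=; first exact: AE_emb_lin.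
  by rewrite -(AE_embK lt y) y0 (lin0 (@AE_ofHom_lin _ _ E i j)).
exact: AE_emb_mul.
Qed.

Lemma Pmod_fin_gen j : fin_gen (Pmod A j).
Proof.
apply: (fin_gen_cyclic (Pmod_axioms E hC j) (g := AE_ofK E j j 1 : mc (Pmod A j) j)) => i y.
by exists y; rewrite /= AE_mul1r.
Qed.

Lemma Scar_diag j : cancel (@Sto k j j) (@Sof k j j) /\ cancel (@Sof k j j) (@Sto k j j).
Proof. by rewrite /Sof /Sto /Scar eqxx. Qed.

Lemma Scar_offdiag0 j i (x : Scar k j i) : i != j -> x = 0.
Proof. by move=> ne; move: x; rewrite /Scar (negbTE ne); exact: Zl_eq0. Qed.

Lemma Sof_offdiag j i (c : k) : i != j -> Sof j i c = 0.
Proof. by move=> ne; apply: Scar_offdiag0. Qed.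

Lemma Sto_lin j i : scalar (@Sto k j i).
Proof. by rewrite /Sto /Scar; case: (i == j) => // c x y; rewrite mulr0 addr0. Qed.

Lemma Sof_lin j i c (x y : k) : Sof j i (c * x + y) = c *: Sof j i x + Sof j i y.
Proof. by rewrite /Sof /Scar; case: (i == j) => //; rewrite scaler0 addr0. Qed.

Lemma dcoef_diag i (a : AEc E i i) : @dcoef _ A i i a = AE_toK a.
Proof.
rewrite /dcoef; set P := fun c : k => _.
have /(epsilon_spec (inhabits 0)) : exists c, P c.
  by exists (AE_toK a) => e; rewrite (eq_irrelevance e erefl) /= -AE_scale_one.
move=> /(_ erefl) /= ->; rewrite (linZ (@AE_toK_lin _ _ E i i)) /=.
by rewrite AE_toK_ofK mulr1.
Qed.

Lemma Smod_act j i l (x : Scar k j l) (a : AEc E i l) :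
  Sof j i (@dcoef _ A i l a * Sto x) = Sof j i (AE_toK a * Sto x).
Proof.
have [e|il] := eqVneq i l; first by subst l; rewrite dcoef_diag.
have [e|lj] := eqVneq l j; first by subst l; rewrite !Sof_offdiag.
by rewrite (Scar_offdiag0 x lj) (lin0 (@Sto_lin j l)) !mulr0.
Qed.

Lemma Smod_axioms j : module_axioms (Smod A j).
Proof.
split=> /= [i l g c a b|i l a g h|i l p g b a|i g]; rewrite ?Smod_act.
- by rewrite (AE_toK_lin c) mulrDl -mulrA Sof_lin.
- by rewrite (linD (@Sto_lin j l)) mulrDr -[in LHS](mul1r (_ * Sto g)) Sof_lin scale1r.
- rewrite AE_toK_mul -mulrA; have [e|lj] := eqVneq l j.
    by subst l; rewrite (Scar_diag j).2.
  rewrite [Sof j l _](Scar_offdiag0 _ lj) (lin0 (@Sto_lin j l)) mulr0.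
  have [e|pj] := eqVneq p j; last by rewrite (Scar_offdiag0 g pj) (lin0 (@Sto_lin j p)) !mulr0.
  by subst p; rewrite (AE_toK_offdiag b lj) mul0r mulr0.
- rewrite AE_toK_ofK mul1r; have [e|ij] := eqVneq i j.
    by subst i; rewrite (Scar_diag j).1.
  by rewrite (Scar_offdiag0 g ij) Sof_offdiag.
Qed.

Lemma Smod_embeds j X : embeds_in_hom (Smod A j) X j (fun i _ => 0).
Proof.
split=> [i c x y|i y lt _|*] /=; first by rewrite scaler0 addr0.
  by apply: Scar_offdiag0; rewrite lt_eqF.
by rewrite (comp0m hC).
Qed.

Lemma Smod_fin_gen j : fin_gen (Smod A j).
Proof.
apply: (fin_gen_cyclic (Smod_axioms j) (g := Sof j j 1 : mc (Smod A j) j)) => i y.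
have [e|ij] := eqVneq i j; last by exists 0; rewrite (Scar_offdiag0 y ij) /= Sof_offdiag.
subst i; exists (AE_ofK E j j (Sto y)); rewrite /= Smod_act AE_toK_ofK.
by rewrite (Scar_diag j).2 mulr1 (Scar_diag j).1.
Qed.
End ProjectivesAndSimples.

Theorem proposition2p7 (k : fieldType) (C : kcat k) (E : int -> ob C) :
  abelian C -> homfin_seq E -> coherent_seq E ->
  (forall (X : ob C) (m : int), coherent_mod (Gamma_le E m X)) /\
  coherent_zalg (AE E).
Proof.
move=> hAb hE hcoh; have hC : klinear_cat C by case: hAb.
have coh := coherent_of_embedding hAb hE hcoh.
split=> [X m|j]; last split.
- exact: coh (Gamma_axioms E hC X m) (Gamma_embeds E X m) (Gamma_fin_gen hC X m hE hcoh).
- exact: coh (Pmod_axioms E hC j) (Pmod_embeds E hC j) (Pmod_fin_gen E hC j).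
- exact: coh (Smod_axioms E j) (Smod_embeds E hC j (E j)) (Smod_fin_gen E j).
Qed.
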